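(* Let $(X,\tau)$ be a Tychonoff, extremally disconnected space. Then for every ideal $\mathcal{P}$ of closed subsets of $X$, the space $(X,\tau,\mathcal{P})$ is $\tau\mathcal{P}$-zero-dimensional.
   Context: An ideal $\mathcal{P}$ of closed subsets of $X$ is a nonempty family of closed sets closed under finite unions and under taking closed subsets. For $f\colon X\to\mathbb{R}$, $D_f$ denotes the set of points of discontinuity of $f$, and $C(X)_\mathcal{P}=\{f\colon X\to\mathbb{R} : \overline{D_f}\in\mathcal{P}\}$. For $f\in C(X)_\mathcal{P}$, $Z_\mathcal{P}(f)=\{x: f(x)=0\}$. A set $U\subseteq X$ is $\tau\mathcal{P}$-clopen if $U=Z_\mathcal{P}(f)=X\setminus Z_\mathcal{P}(g)$ for some $f,g\in C(X)_\mathcal{P}$. Sets $A,B\subseteq X$ are $\mathcal{P}$-completely separated if there is $f\in C(X)_\mathcal{P}$ with $f(A)\subseteq\{0\}$ and $f(B)\subseteq\{1\}$. $(X,\tau,\mathcal{P})$ is $\tau\mathcal{P}$-zero-dimensional if for every pair of $\mathcal{P}$-completely separated sets $A,B\subseteq X$ there is a $\tau\mathcal{P}$-clopen $U$ with $A\subseteq U\subseteq X\setminus B$. *)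

From HB Require Import structures.
From mathcomp Require Import all_boot all_order all_algebra.
From mathcomp Require Import all_classical all_reals all_analysis.
Set Implicit Arguments. Unset Strict Implicit. Unset Printing Implicit Defensive.
Import Order.TTheory GRing.Theory Num.Theory.
Import numFieldNormedType.Exports.
Local Open Scope classical_set_scope.
Local Open Scope ring_scope.

Section Defs.
Context {R : realType} {X : topologicalType}.

Definition tychonoff_space : Prop :=
  accessible_space X /\
  (forall (x : X) (B : set X), closed B -> ~ B x ->
     exists f : X -> R, continuous f /\ (forall y, 0 <= f y <= 1) /\
       f x = 0 /\ (forall y, B y -> f y = 1)).

Definition extremally_disconnected : Prop :=
  forall U : set X, open U -> open (closure U).

Definition closed_ideal (P : set (set X)) : Prop :=
  [/\ exists A, P A,
      (forall A, P A -> closed A),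
      (forall A B, P A -> P B -> P (A `|` B)) &
      (forall A B, P A -> closed B -> B `<=` A -> P B)].

Definition discont_set (f : X -> R) : set X :=
  [set x | ~ {for x, continuous f}].

Definition CP (P : set (set X)) (f : X -> R) : Prop :=
  P (closure (discont_set f)).

Definition ZP (f : X -> R) : set X := [set x | f x = 0].

Definition tauP_clopen (P : set (set X)) (U : set X) : Prop :=
  exists f g : X -> R, [/\ CP P f, CP P g, U = ZP f & U = ~` ZP g].

Definition P_completely_separated (P : set (set X)) (A B : set X) : Prop :=
  exists f : X -> R, [/\ CP P f, (forall a, A a -> f a = 0) &
                          (forall b, B b -> f b = 1)].

Definition tauP_zero_dimensional (P : set (set X)) : Prop :=
  forall A B : set X, P_completely_separated P A B ->
    exists U : set X, [/\ tauP_clopen P U, A `<=` U & U `<=` ~` B].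

End Defs.

From mathcomp Require Import all_boot all_order all_algebra.
From mathcomp Require Import all_classical all_reals all_analysis.
From mathcomp Require Import lra.
Set Implicit Arguments. Unset Strict Implicit. Unset Printing Implicit Defensive.
Import Order.TTheory GRing.Theory Num.Theory.
Import numFieldNormedType.Exports.
Local Open Scope classical_set_scope.
Local Open Scope ring_scope.

(* Let f separate A from B, and let D be the closure of its discontinuity set,
   so D is in P and f is continuous on the open set X \ D.  The set
   O = {x notin D | f x < 1/2} is open, hence its closure is clopen by extremal
   disconnectedness.  Then U = (D /\ A) \/ (closure O \ D) contains A, misses B
   (off D, B lies in the open set {f > 1/2}, which does not meet O), and its
   indicator is locally constant off D, so it is discontinuous only on D and
   witnesses that U is tauP-clopen. *)

Section DiscontinuitySet.
Variables (R : realType) (X : topologicalType).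
Implicit Types (f h : X -> R) (D U V : set X) (x : X).

Lemma discont_set_subl (c : R) h :
  discont_set (fun x => c - h x) = discont_set h.
Proof.
have csubC (g : X -> R) x : {for x, continuous g} ->
    {for x, continuous (fun y => c - g y)}.
  by move=> gx; apply: continuousB => //; exact: cvg_cst.
apply/seteqP; split => x /= ncx cx; apply: ncx; first exact: csubC.
have -> : h = fun y => c - (c - h y) by apply: funext => y; rewrite subKr.
exact: csubC.
Qed.

Lemma continuous_off_discont f x :
  ~ closure (discont_set f) x -> {for x, continuous f}.
Proof. by move=> nDx; apply: contrapT => ncx; apply: nDx; exact: subset_closure. Qed.

Lemma open_sublevel_off D f (r : R) : closed D ->
  (forall x, ~ D x -> {for x, continuous f}) -> open [set x | ~ D x /\ f x < r].
Proof.
move=> cD fcont; rewrite openE => x [nDx fx].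
have nearDC : \forall y \near x, ~ D y.
  exact: open_nbhs_nbhs (conj (closed_openC cD) nDx).
have nearlt : \forall y \near x, f y < r.
  exact: fcont _ nDx _ (open_nbhs_nbhs (conj (@open_lt R r) fx)).
by near=> y; split; [near: y | near: y].
Unshelve. all: by end_near.
Qed.

Lemma not_closure_sublevel (S : set X) f (r : R) x :
  {for x, continuous f} -> r < f x -> ~ closure [set y | S y /\ f y < r] x.
Proof.
move=> fx ltrfx clx.
have neargt : \forall y \near x, r < f y.
  exact: fx _ (open_nbhs_nbhs (conj (@open_gt R r) ltrfx)).
have [y [[_ fyr] rfy]] := clx _ neargt.
by move: (lt_trans rfy fyr); rewrite ltxx.
Qed.

Lemma near_clopen_iff V x : open V -> closed V -> \forall y \near x, V y <-> V x.
Proof.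
move=> oV cV; have [Vx|nVx] := pselect (V x).
  by apply: filterS (open_nbhs_nbhs (conj oV Vx)).
apply: filterS (open_nbhs_nbhs (conj (closed_openC cV) nVx)) => y nVy.
by split.
Qed.

Lemma indic_continuous_at U x :
  (\forall y \near x, U y <-> U x) -> {for x, continuous (\1_U : X -> R)}.
Proof.
move=> nearU; apply: (near_cst_continuous (\1_U x : R)).
apply: filterS nearU => y Uyx; rewrite !indicE.
by have -> : (y \in U) = (x \in U) by apply/idP/idP; rewrite !inE => /Uyx.
Qed.

Lemma discont_indic_sub D U V : closed D -> open V -> closed V ->
  (forall x, ~ D x -> U x <-> V x) -> discont_set (\1_U : X -> R) `<=` D.
Proof.
move=> cD oV cV UV x ncx; apply: contrapT => nDx; apply: ncx.
apply: indic_continuous_at.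
have nearDC : \forall y \near x, ~ D y.
  exact: open_nbhs_nbhs (conj (closed_openC cD) nDx).
near=> y; rewrite (UV y) ?(UV x) //; last by near: y.
by near: y; exact: near_clopen_iff.
Unshelve. all: by end_near.
Qed.

Lemma ZP_indic U : ZP (\1_U : X -> R) = ~` U.
Proof.
apply/seteqP; split => x; rewrite /ZP /= indicE.
  by move=> /eqP; rewrite pnatr_eq0 eqb0 => /negP; rewrite inE.
by move=> nUx; rewrite memNset.
Qed.

Lemma ZP_indic_subl U : ZP (fun x => 1 - \1_U x : R) = U.
Proof.
apply/seteqP; split => x; rewrite /ZP /= indicE.
  by move=> /eqP; rewrite subr_eq0 eq_sym pnatr_eq1 eqb1 inE.
by move=> Ux; rewrite mem_set // subrr.
Qed.

End DiscontinuitySet.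

Section IdealOfClosedSets.
Variables (R : realType) (X : topologicalType) (P : set (set X)).
Hypothesis idealP : closed_ideal P.

Lemma CP_discont_sub (f : X -> R) D :
  P D -> discont_set f `<=` D -> CP P f.
Proof.
case: idealP => _ Pclosed _ Psub PD fD.
apply: (Psub D) => //; first exact: closed_closure.
by rewrite [X in _ `<=` X](closure_id D).1 //; [exact: closureS | exact: Pclosed].
Qed.

Lemma tauP_clopen_indic U : CP P (\1_U : X -> R) -> @tauP_clopen R X P U.
Proof.
move=> PU; exists (fun x => 1 - \1_U x : R), \1_U; split => //.
- by rewrite /CP discont_set_subl.
- by rewrite ZP_indic_subl.
- by rewrite ZP_indic setCK.
Qed.

End IdealOfClosedSets.

Theorem theorem3p3 (R : realType) (X : topologicalType) :
  @tychonoff_space R X -> @extremally_disconnected X ->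
  forall P : set (set X), closed_ideal P -> @tauP_zero_dimensional R X P.
Proof.
move=> _ extdis P idealP A B [f [Pf fA fB]].
set D := closure (discont_set f).
have cD : closed D := @closed_closure _ _.
set O := [set x | ~ D x /\ f x < 2^-1].
have oclO : open (closure O).
  by apply/extdis/open_sublevel_off => //; exact: continuous_off_discont.
set U := [set x | (D x /\ A x) \/ (~ D x /\ closure O x)].
exists U; split.
- apply/tauP_clopen_indic/(CP_discont_sub idealP Pf) => //.
  apply: (discont_indic_sub cD oclO (@closed_closure _ O)) => x nDx.
  by rewrite /U /=; split => [[[]|[]]|] //; right.
- move=> a Aa; have [Da|nDa] := pselect (D a); [by left | right; split => //].
  by apply: subset_closure; split; rewrite ?fA //; lra.
- move=> x [[_ Ax]|[nDx clOx]] Bx.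
    by move: (fB x Bx); rewrite fA // => /eqP; rewrite eq_sym oner_eq0.
  apply: not_closure_sublevel clOx; first exact: continuous_off_discont.
  by rewrite fB //; lra.
Qed.
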